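(* Let $\rho,p,u,x$ be grid functions satisfying the scheme (M) at every node with $\check B\equiv0$ (horizontal bottom). Then at every node the discrete center-of-mass law $$(t\,u-x)_{\check t}+(t\,Q)_{\bar s}=0$$ holds, where $t$ is the time coordinate of the node (so $(tu-x)_{\check t}=\big(tu-x-(t-\tau)\check u+\check x\big)/\tau$).
   Context: Fix mesh steps $\tau>0$, $h>0$ and a constant $\alpha\in\mathbb R$. A grid function is a real-valued function $f=f(t,s)$ on the uniform orthogonal mesh $\{(n\tau,kh): n,k\in\mathbb Z\}$; at the node $(n\tau,kh)$ the symbol $t$ denotes $n\tau$. Shifts: $\hat f=f(t+\tau,s)$, $\check f=f(t-\tau,s)$, $f^+=f_+=f(t,s+h)$, $f^-=f_-=f(t,s-h)$; a shift applied to a composite expression shifts the whole expression (e.g. $\check u_s$ is $u_s$ at $(t-\tau,s)$). Differences: $f_t=(\hat f-f)/\tau$, $f_{\check t}=(f-\check f)/\tau$, $f_s=(f_+-f)/h$, $f_{\bar s}=(f-f_-)/h$. Let $\rho>0$, $p>0$, $u$, $x$, $\check B$ be grid functions, and set $$Q=\Big(\frac{4}{\rho\check\rho}-\frac{2}{\sqrt p}\Big(\frac1\rho+\frac1{\check\rho}\Big)+\frac1p\Big)^{-1}-\frac{\alpha^2}{\sqrt p}$$ (the bracket being assumed nonzero). The scheme (M) (shallow water MHD in mass Lagrangian coordinates) is the requirement that at every node $$\rho_{\check t}+\tfrac12\rho\check\rho\,(u_s+\check u_s)=0,\quad u_{\check t}+Q_{\bar s}-\check B=0,\quad x_t=u,\quad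 \check x_s+x_s=\frac{1}{\sqrt{\check p}}+\frac1{\sqrt p}=\frac{2}{\check\rho}.$$ *)

(* concrete reals R, mesh nodes indexed by (n,k) : Z * Z,
   node (n,k) is the point (n*tau, k*h). *)
From Stdlib Require Import Reals ZArith.
Open Scope R_scope.

Definition grid := Z -> Z -> R.

Definition hat   (f : grid) : grid := fun n k => f (n + 1)%Z k.
Definition check (f : grid) : grid := fun n k => f (n - 1)%Z k.
Definition splus (f : grid) : grid := fun n k => f n (k + 1)%Z.
Definition sminus(f : grid) : grid := fun n k => f n (k - 1)%Z.

Definition dt    (tau : R) (f : grid) : grid := fun n k => (hat f n k - f n k) / tau.
Definition dtb   (tau : R) (f : grid) : grid := fun n k => (f n k - check f n k) / tau.
Definition ds    (h : R)   (f : grid) : grid := fun n k => (splus f n k - f n k) / h.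
Definition dsb   (h : R)   (f : grid) : grid := fun n k => (f n k - sminus f n k) / h.

Definition tgrid (tau : R) : grid := fun n _ => IZR n * tau.

Definition mulg (f g : grid) : grid := fun n k => f n k * g n k.
Definition subg (f g : grid) : grid := fun n k => f n k - g n k.

Definition Qbracket (rho p : grid) : grid := fun n k =>
  4 / (rho n k * check rho n k)
  - 2 / sqrt (p n k) * (1 / rho n k + 1 / check rho n k)
  + 1 / p n k.

Definition Q (alpha : R) (rho p : grid) : grid := fun n k =>
  / Qbracket rho p n k - alpha ^ 2 / sqrt (p n k).

Definition schemeM (tau h alpha : R) (rho p u x Bc : grid) : Prop :=
  forall n k : Z,
    dtb tau rho n k + / 2 * rho n k * check rho n k
                       * (ds h u n k + check (ds h u) n k) = 0
 /\ dtb tau u n k + dsb h (Q alpha rho p) n k - Bc n k = 0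
 /\ dt tau x n k = u n k
 /\ check (ds h x) n k + ds h x n k = 1 / sqrt (check p n k) + 1 / sqrt (p n k)
 /\ 1 / sqrt (check p n k) + 1 / sqrt (p n k) = 2 / check rho n k.

(* The argument is a discrete product rule.  Since the time coordinate t of a
   node satisfies  t - check t = tau, the backward time difference obeys
       (t f)_{check t} = t f_{check t} + check f,
   while t does not depend on s, so  (t g)_{bar s} = t g_{bar s}.  Hence
       (t u - x)_{check t} + (t Q)_{bar s}
         = t (u_{check t} + Q_{bar s}) + (check u - x_{check t}).
   The first bracket vanishes by the momentum equation of (M) with B = 0,
   and the second by the kinematic equation x_t = u read at time t - tau. *)
From Stdlib Require Import Reals ZArith Lra Lia.
Open Scope R_scope.

Lemma dtb_subg (tau : R) (f g : grid) (n k : Z) :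
  tau <> 0 -> dtb tau (subg f g) n k = dtb tau f n k - dtb tau g n k.
Proof. intros Htau; unfold dtb, subg, check; field; exact Htau. Qed.

Lemma dtb_mul_time (tau : R) (f : grid) (n k : Z) :
  tau <> 0 ->
  dtb tau (mulg (tgrid tau) f) n k = tgrid tau n k * dtb tau f n k + check f n k.
Proof.
  intros Htau; unfold dtb, mulg, tgrid, check.
  rewrite minus_IZR; field; exact Htau.
Qed.

Lemma dsb_mul_time (tau h : R) (g : grid) (n k : Z) :
  dsb h (mulg (tgrid tau) g) n k = tgrid tau n k * dsb h g n k.
Proof. unfold dsb, mulg, tgrid, sminus, Rdiv; ring. Qed.

(* The forward difference at time t - tau is the backward difference at t;
   this turns the kinematic equation x_t = u into  x_{check t} = check u. *)
Lemma dt_check (tau : R) (f : grid) (n k : Z) :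
  check (dt tau f) n k = dtb tau f n k.
Proof.
  unfold check, dt, dtb, hat, check.
  now replace (n - 1 + 1)%Z with n by lia.
Qed.

Theorem mainTheorem11 (tau h alpha : R) (rho p u x : grid) :
  0 < tau -> 0 < h ->
  (forall n k, 0 < rho n k) ->
  (forall n k, 0 < p n k) ->
  (forall n k, Qbracket rho p n k <> 0) ->
  schemeM tau h alpha rho p u x (fun _ _ => 0) ->
  forall n k : Z,
    dtb tau (subg (mulg (tgrid tau) u) x) n k
    + dsb h (mulg (tgrid tau) (Q alpha rho p)) n k = 0.
Proof.
  intros Htau _ _ _ _ HM n k.
  assert (Htau0 : tau <> 0) by lra.
  destruct (HM n k) as [_ [Hmomentum _]].
  destruct (HM (n - 1)%Z k) as [_ [_ [Hkinematic _]]].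
  assert (Hx : dtb tau x n k = check u n k)
    by (rewrite <- dt_check; exact Hkinematic).
  rewrite dtb_subg, dtb_mul_time, dsb_mul_time, Hx by assumption.
  replace (tgrid tau n k * dtb tau u n k + check u n k - check u n k
           + tgrid tau n k * dsb h (Q alpha rho p) n k)
    with (tgrid tau n k * (dtb tau u n k + dsb h (Q alpha rho p) n k)) by ring.
  replace (dtb tau u n k + dsb h (Q alpha rho p) n k) with 0 by lra.
  ring.
Qed.
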